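(* Let $p>3$ be prime, $t\in\{1,3,p,3p\}$, and $1\le r\le 3p-1$ with $\gcd(r,3p)=1$. Then \[\mathcal{S}(3,r,t)=\begin{cases}3(|r|_p-1) & \text{if } r\equiv1\pmod3\text{ and } t\in\{3,3p\},\\ 3(|r|_p-1) & \text{if } r\equiv 1\pmod 3,\ t\in\{1,p\}\text{ and } 3\nmid|r|_p,\\ |r|_p-3 & \text{if } r\equiv 1\pmod 3,\ t\in\{1,p\}\text{ and } 3\mid |r|_p,\\ 3(|r|_p-1) & \text{if } r\equiv 2\pmod 3\text{ and } |r|_p\text{ is odd},\\ 3\left(\frac{|r|_p}{2}-1\right) & \text{if } r\equiv 2\pmod 3\text{ and }|r|_p\text{ is even}.\end{cases}\]
   Context: $|r|_m$ is the multiplicative order of $r$ modulo $m$ (with $|r|_1=1$). $S_k(x):=1+x+\cdots+x^{k-1}$, $S_0:=0$. For $m\ge1$ with $\gcd(r,m)=1$, $\kappa(m,r,t):=\dfrac{m|r|_m}{\gcd(m,\,tS_{|r|_m}(r))}$. For $d\in\{1,3,p,3p\}$, $\Lambda(d,r,t):=\{\ell>0:\ \ell \text{ divides } \frac{|r|_{3p}}{\gcd(\kappa(d,r,t),|r|_{3p})}\text{ and }\gcd(r^{\ell\kappa(d,r,t)}-1,3p)=d\}$, and $\mathcal{S}(d,r,t):=\sum_{\ell\in\Lambda(d,r,t)} d\,\phi\!\left(\frac{|r|_{3p}}{\ell\gcd(\kappa(d,r,t),|r|_{3p})}\right)$, with $\phi$ Euler's function. *)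

From mathcomp Require Import all_boot all_order all_algebra.
Set Implicit Arguments. Unset Strict Implicit. Unset Printing Implicit Defensive.

(* For m = 1 this gives 1.  When coprime r m and m >= 1 the
   order is at most m, so searching k in 1..m suffices (the value for
   non-coprime r is irrelevant). *)
Definition ordm (m r : nat) : nat :=
  (find (fun k => r ^ k.+1 == 1 %[mod m]) (iota 0 m)).+1.

Definition Sgeom (k x : nat) : nat := \sum_(i < k) x ^ i.

Definition kappa (m r t : nat) : nat :=
  m * ordm m r %/ gcdn m (t * Sgeom (ordm m r) r).

Definition Lambda (p d r t : nat) : seq nat :=
  let N := ordm (3 * p) r in
  let k := kappa d r t in
  [seq l <- divisors (N %/ gcdn k N) | gcdn (r ^ (l * k) - 1) (3 * p) == d].

Definition Ssum (p d r t : nat) : nat :=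
  let N := ordm (3 * p) r in
  let k := kappa d r t in
  \sum_(l <- Lambda p d r t) d * totient (N %/ (l * gcdn k N)).

From mathcomp Require Import all_boot all_order all_algebra.
From mathcomp Require Import cyclic.
From mathcomp Require Import zify.
Set Implicit Arguments. Unset Strict Implicit. Unset Printing Implicit Defensive.

(* Since |r|_{3p} = lcm(|r|_3, |r|_p) and |r|_3 divides kappa := kappa(3,r,t), the bound
   M := |r|_{3p} / gcd(kappa, |r|_{3p}) equals |r|_p / gcd(|r|_p, kappa), and
   gcd(r^(l kappa) - 1, 3p) = 3 exactly when |r|_p does not divide l kappa, i.e. when l is a
   divisor of M other than M.  Hence S(3,r,t) = 3 (sum of phi(M/l) over those l) = 3 (M - 1),
   and kappa is 1, 3 or 2 depending on r mod 3 and t. *)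

Lemma leq_totient n : totient n <= n.
Proof.
rewrite totient_count_coprime -[X in _ <= X]subn0 -[X in _ <= X]muln1.
rewrite -sum_nat_const_nat; apply: leq_sum => i _; exact: leq_b1.
Qed.

Lemma dvdn_ext a b : (forall n, (a %| n) = (b %| n)) -> a = b.
Proof. by move=> ab; apply/eqP; rewrite eqn_dvd ab dvdnn -ab dvdnn. Qed.

Lemma dvdn_mul_gcd o k l : 0 < o -> (o %| l * k) = (o %/ gcdn o k %| l).
Proof.
move=> o_gt0; have g_gt0 : 0 < gcdn o k by rewrite gcdn_gt0 o_gt0.
have -> : (o %| l * k) = (o %| gcdn (l * k) (l * o)).
  by rewrite dvdn_gcd (dvdn_mull l (dvdnn o)) andbT.
by rewrite -muln_gcdr gcdnC -{1}(divnK (dvdn_gcdl o k)) dvdn_pmul2r.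
Qed.

Lemma divn_gcd_lcm k n : 0 < k -> n %/ gcdn k n = lcmn k n %/ k.
Proof. by move=> k_gt0; rewrite /lcmn -muln_divA ?dvdn_gcdr // mulKn. Qed.

Section MultiplicativeOrder.

Variables m r : nat.
Hypotheses (m_gt0 : 0 < m) (coprime_rm : coprime r m).

Lemma ordm_min :
  r ^ ordm m r = 1 %[mod m] /\ forall j, 0 < j < ordm m r -> r ^ j != 1 %[mod m].
Proof.
pose a k := r ^ k.+1 == 1 %[mod m].
have has_a : has a (iota 0 m).
  apply/hasP; exists (totient m).-1.
    by rewrite mem_iota add0n prednK ?totient_gt0 ?leq_totient.
  by rewrite /a prednK ?totient_gt0 //; apply/eqP; exact: Euler_exp_totient.
have find_lt : find a (iota 0 m) < m by rewrite -[X in _ < X](size_iota 0 m) -has_find.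
split; first by apply/eqP; have := nth_find 0 has_a; rewrite nth_iota ?add0n.
move=> [|j] // /andP[_ j_lt]; have := @before_find _ 0 a (iota 0 m) j j_lt.
by rewrite nth_iota ?add0n ?(ltn_trans (j_lt : j < _) find_lt) // => /negbT.
Qed.

Lemma ordmP n : (r ^ n == 1 %[mod m]) = (ordm m r %| n).
Proof.
have [rk min_k] := ordm_min.
have -> : r ^ n = r ^ (n %% ordm m r) %[mod m].
  rewrite {1}(divn_eq n (ordm m r)) expnD [_ * ordm m r]mulnC expnM.
  by rewrite -modnMml -modnXm rk modnXm exp1n modnMml mul1n.
rewrite /dvdn; case: (posnP (n %% ordm m r)) => [-> | n_gt0]; first by rewrite eqxx.
by rewrite (negbTE (min_k _ _)) // n_gt0 ltn_pmod.
Qed.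

End MultiplicativeOrder.

Lemma ordm_mul m n r : 0 < m -> 0 < n -> coprime m n -> coprime r (m * n) ->
  ordm (m * n) r = lcmn (ordm m r) (ordm n r).
Proof.
move=> m_gt0 n_gt0 co_mn co_r; have := co_r; rewrite coprimeMr => /andP[co_m co_n].
apply: dvdn_ext => k.
by rewrite -ordmP ?muln_gt0 ?m_gt0 // chinese_remainder // !ordmP // dvdn_lcm.
Qed.

Lemma ordm3_mod3_1 r : r %% 3 = 1 -> ordm 3 r = 1.
Proof. by move=> r1; rewrite /ordm /= expn1 r1. Qed.

Lemma ordm3_mod3_2 r : r %% 3 = 2 -> ordm 3 r = 2.
Proof. by move=> r2; rewrite /ordm /= expn1 r2 /= -modnXm r2. Qed.

Lemma kappa3_mod3_1 r t : r %% 3 = 1 -> kappa 3 r t = 3 %/ gcdn 3 t.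
Proof. by move=> r1; rewrite /kappa ordm3_mod3_1 // /Sgeom big_ord1 !muln1. Qed.

Lemma kappa3_mod3_2 r t : r %% 3 = 2 -> kappa 3 r t = 2.
Proof.
move=> r2; rewrite /kappa ordm3_mod3_2 // /Sgeom !big_ord_recl big_ord0 /= addn0.
suff /gcdn_idPl -> : 3 %| t * (r ^ 0 + r ^ 1) by [].
by rewrite dvdn_mull // /dvdn expn0 expn1 -modnDmr r2.
Qed.

Lemma kappa_gt0 m r t : 0 < m -> 0 < kappa m r t.
Proof.
move=> m_gt0; rewrite /kappa divn_gt0 ?gcdn_gt0 ?m_gt0 //.
by rewrite (leq_trans (dvdn_leq m_gt0 (dvdn_gcdl _ _))) // leq_pmulr.
Qed.

Lemma sum_totient_divisors n : 0 < n -> \sum_(d <- divisors n) totient d = n.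
Proof.
move=> n_gt0; rewrite -[RHS](sum_totient_dvd n) -(big_mkord (dvdn^~ n)) -[RHS]big_filter.
apply: perm_big; apply: uniq_perm; rewrite ?divisors_uniq ?filter_uniq ?iota_uniq // => d.
rewrite mem_filter mem_index_iota -dvdn_divisors //.
by case: (boolP (d %| n)) => //= /(dvdn_leq n_gt0).
Qed.

Lemma sum_totient_codivisors n : 0 < n -> \sum_(d <- divisors n) totient (n %/ d) = n.
Proof.
move=> n_gt0; rewrite -(big_map (divn n) xpredT totient) -[RHS](sum_totient_divisors n_gt0).
apply: perm_big; apply: uniq_perm; rewrite ?divisors_uniq //.
  rewrite map_inj_in_uniq ?divisors_uniq // => a b.
  by rewrite -!dvdn_divisors // => a_dvd b_dvd /(congr1 (divn n)); rewrite !divnA ?mulKn.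
move=> d; apply/mapP/idP => [[e] | ].
  by rewrite -!dvdn_divisors // => e_dvd ->; exact: dvdn_div.
rewrite -dvdn_divisors // => d_dvd; exists (n %/ d); last by rewrite divnA // mulKn.
by rewrite -dvdn_divisors // dvdn_div.
Qed.

Lemma sum_totient_proper_codivisors n : 0 < n ->
  \sum_(d <- divisors n | d != n) totient (n %/ d) = n - 1.
Proof.
move=> n_gt0; have := sum_totient_codivisors n_gt0.
rewrite (bigD1_seq n) ?divisors_id ?divisors_uniq //= divnn n_gt0 (_ : totient 1 = 1) //.
by rewrite add1n subn1 => /(congr1 predn).
Qed.

Lemma Ssum_proper_divisors p d r t :
  let N := ordm (3 * p) r in let M := N %/ gcdn (kappa d r t) N in
  (forall l, l %| M -> (gcdn (r ^ (l * kappa d r t) - 1) (3 * p) == d) = (l != M)) ->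
  Ssum p d r t = d * (M - 1).
Proof.
move=> N M Lambda_M.
have M_gt0 : 0 < M by rewrite divn_gt0 ?gcdn_gt0 ?orbT // dvdn_leq ?dvdn_gcdr.
rewrite -(sum_totient_proper_codivisors M_gt0) big_distrr /Ssum /Lambda /= big_filter.
rewrite -/N -/M [LHS]big_seq_cond [RHS]big_seq_cond.
apply: eq_big => [l | l _]; last by rewrite [l * _]mulnC divnMA.
by rewrite -dvdn_divisors //; case: (boolP (l %| M)) => // /Lambda_M ->.
Qed.

Lemma gcdn_mul_prime_eq q p a : prime p -> coprime q p ->
  (gcdn a (q * p) == q) = (q %| a) && ~~ (p %| a).
Proof.
move=> p_prime co_qp; apply/idP/idP => [/eqP g_eq | /andP[q_dvd p_ndvd]].
  rewrite -g_eq dvdn_gcdl /=; apply/negP => p_dvd.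
  have : p %| gcdn q p by rewrite dvdn_gcd dvdnn -{1}g_eq dvdn_gcd p_dvd dvdn_mull.
  by rewrite (eqP co_qp) dvdn1 => /eqP p1; move: p_prime; rewrite p1.
have co_ap : coprime a p by rewrite coprime_sym prime_coprime.
by rewrite mulnC Gauss_gcdr //; apply/eqP/gcdn_idPr.
Qed.

Section KappaThree.

Variables p r t : nat.
Hypotheses (p_prime : prime p) (p_gt3 : 3 < p) (coprime_r3p : coprime r (3 * p)).

Lemma coprime3p : coprime 3 p.
Proof. by rewrite prime_coprime // dvdn_prime2 //; case: eqP p_gt3 => // <-. Qed.

Lemma gcdn_expn_sub1_eq3 n :
  (gcdn (r ^ n - 1) (3 * p) == 3) = (ordm 3 r %| n) && ~~ (ordm p r %| n).
Proof.
have := coprime_r3p; rewrite coprimeMr => /andP[co3 cop].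
have r_gt0 : 0 < r by case: r co3.
rewrite gcdn_mul_prime_eq ?coprime3p // -!eqn_mod_dvd ?expn_gt0 ?r_gt0 //.
by rewrite !ordmP ?prime_gt0.
Qed.

Lemma Ssum3_eq : ordm 3 r %| kappa 3 r t ->
  Ssum p 3 r t = 3 * (ordm p r %/ gcdn (ordm p r) (kappa 3 r t) - 1).
Proof.
move=> ord3_dvd; set k := kappa 3 r t; set o := ordm p r.
have k_gt0 : 0 < k := kappa_gt0 r t (isT : 0 < 3).
have N_eq : ordm (3 * p) r = lcmn (ordm 3 r) o.
  by rewrite ordm_mul ?prime_gt0 ?coprime3p.
have M_eq : ordm (3 * p) r %/ gcdn k (ordm (3 * p) r) = o %/ gcdn o k.
  by rewrite divn_gcd_lcm // N_eq lcmnA (lcmn_idPl ord3_dvd) -divn_gcd_lcm // gcdnC.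
rewrite -M_eq; apply: Ssum_proper_divisors => l; rewrite M_eq => l_dvd.
by rewrite gcdn_expn_sub1_eq3 dvdn_mull //= dvdn_mul_gcd // eqn_dvd l_dvd.
Qed.

End KappaThree.

Local Open Scope ring_scope.

Theorem lemma5p9 (p t r : nat) :
  prime p -> (3 < p)%N -> t \in [:: 1; 3; p; 3 * p]%N ->
  (1 <= r <= 3 * p - 1)%N -> coprime r (3 * p) ->
  let o := ordm p r in
  let S := (Ssum p 3 r t)%:Z in
  [/\ (r %% 3 = 1)%N -> t \in [:: 3; 3 * p]%N -> S = 3 * (o%:Z - 1),
      (r %% 3 = 1)%N -> t \in [:: 1; p]%N -> ~~ (3 %| o)%N -> S = 3 * (o%:Z - 1),
      (r %% 3 = 1)%N -> t \in [:: 1; p]%N -> (3 %| o)%N -> S = o%:Z - 3,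
      (r %% 3 = 2)%N -> odd o -> S = 3 * (o%:Z - 1)
    & (r %% 3 = 2)%N -> ~~ odd o -> S = 3 * ((o %/ 2)%N%:Z - 1)].
Proof.
move=> p_prime p_gt3 _ _ co o S; have o_gt0 : (0 < o)%N by [].
have S_eq k : kappa 3 r t = k -> (ordm 3 r %| k)%N -> S = (3 * (o %/ gcdn o k - 1))%N :> int.
  by move=> <- ord3_dvd; rewrite /S Ssum3_eq.
have gcd3t1 : t \in [:: 1; p]%N -> gcdn 3 t = 1%N.
  by rewrite !inE => /orP[] /eqP ->; rewrite ?gcdn1 ?(eqP (coprime3p p_prime p_gt3)).
have gcd3t3 : t \in [:: 3; 3 * p]%N -> gcdn 3 t = 3%N.
  by rewrite !inE => /orP[] /eqP ->; rewrite ?gcdnn ?gcdnMr.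
split=> [r1 t3 | r1 t1 o3 | r1 t1 o3 | r2 o_odd | r2 o_even].
- rewrite (S_eq 1%N) ?kappa3_mod3_1 ?gcd3t3 ?ordm3_mod3_1 ?gcdn1 ?divn1 //; lia.
- rewrite (S_eq 3%N) ?kappa3_mod3_1 ?gcd3t1 ?ordm3_mod3_1 ?divn1 //.
  by rewrite gcdnC (eqP (_ : coprime 3 o)) ?prime_coprime ?divn1 //; lia.
- rewrite (S_eq 3%N) ?kappa3_mod3_1 ?gcd3t1 ?ordm3_mod3_1 ?divn1 ?(gcdn_idPr o3) //.
  have := divnK o3; lia.
- rewrite (S_eq 2%N) ?kappa3_mod3_2 ?ordm3_mod3_2 //.
  by rewrite gcdnC (eqP (_ : coprime 2 o)) ?coprime2n ?divn1 //; lia.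
- rewrite (S_eq 2%N) ?kappa3_mod3_2 ?ordm3_mod3_2 //.
  have o2 : (2 %| o)%N by rewrite dvdn2.
  by rewrite (gcdn_idPr o2); lia.
Qed.
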